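(* Let $\mathcal{C}$ be a $\beta$-avoiding simplicial complex that has an induced subcomplex isomorphic to $C_4$. Then the subcomplex of $\mathcal{C}$ induced on its non-ghost vertices is isomorphic to $\operatorname{cone}^p(C_4)$ for some $p\ge0$.
   Context: A simplicial complex on a finite ground set $V$ is a family of subsets of $V$ closed under subsets; a vertex $v\in V$ is a ghost vertex if $\{v\}\notin\mathcal{C}$, otherwise non-ghost. The induced subcomplex on $W\subseteq V$ is $\{F\in\mathcal{C}:F\subseteq W\}$ on $W$. $C_4$ is the complex on $\{1,2,3,4\}$ with facets $12,23,34,14$. $\operatorname{cone}^p(\mathcal{D})$ is the complex on the ground set of $\mathcal{D}$ together with $p$ new vertices $u_1,\dots,u_p$, with facets $F\cup\{u_1,\dots,u_p\}$ for $F$ a facet of $\mathcal{D}$ ($\operatorname{cone}^0(\mathcal{D})=\mathcal{D}$). For $S\subseteq V$, $\mathcal{C}\setminus S$ is the induced subcomplex on $V\setminus S$; for a face $R$, $\operatorname{link}_R(\mathcal{C})=\{F\setminus R: R\subseteq F\in\mathcal{C}\}$ on $V\setminus R$. A minor is $\operatorname{link}_R(\mathcal{C}\setminus S)$ with $S\cap R=\emptyset$, $R$ a face. $\mathcal{C}$ is $\beta$-avoiding if no minor is isomorphic to any of: $P_4$ (on $\{1,2,3,4\}$, facets $12,23,34$); $O_6$ (on $\{1,\dots,6\}$, faces the subsets containing none of $\{1,2\},\{3,4\},\{5,6\}$) or its Alexander dual $O_6^*$ (Alexander dual of $\mathcal{D}$ on $V$: $\{S\subseteq V: V\setminus S\notin\mathcal{D}\}$);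 $J_1$ (on $\{1,\dots,5\}$, facets $12,15,234,345$) or $J_1^*$ (facets $134,235,245$); $J_2$ (on $\{1,\dots,5\}$, facets $12,235,34,145$); $\partial\Delta_n\sqcup\{v\}$ for $n\ge1$ (all proper subsets of an $(n+1)$-set together with one extra isolated vertex). *)

From mathcomp Require Import all_boot.
Set Implicit Arguments. Unset Strict Implicit. Unset Printing Implicit Defensive.

Record complex (T : finType) := Complex { ground : {set T}; faces : {set {set T}} }.

Definition is_complex (T : finType) (C : complex T) : Prop :=
  (forall F, F \in faces C -> F \subset ground C) /\
  (forall F G : {set T}, F \in faces C -> G \subset F -> G \in faces C).

Definition induced (T : finType) (C : complex T) (W : {set T}) : complex T :=
  Complex W [set F in faces C | F \subset W].

Definition deletion (T : finType) (C : complex T) (S : {set T}) : complex T :=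
  induced C (ground C :\: S).

Definition link (T : finType) (C : complex T) (R : {set T}) : complex T :=
  Complex (ground C :\: R) [set F :\: R | F in faces C & R \subset F].

Definition is_minor (T : finType) (D C : complex T) : Prop :=
  exists S R : {set T}, [disjoint S & R] /\ R \in faces (deletion C S) /\
    D = link (deletion C S) R.

Definition iso (T1 T2 : finType) (C1 : complex T1) (C2 : complex T2) : Prop :=
  exists f : T1 -> T2, {in ground C1 &, injective f} /\ f @: ground C1 = ground C2 /\
    forall F : {set T1}, F \subset ground C1 -> (F \in faces C1) = (f @: F \in faces C2).

Definition alexander_dual (T : finType) (C : complex T) : complex T :=
  Complex (ground C) [set S : {set T} | (S \subset ground C) && ((ground C :\: S) \notin faces C)].

Definition gen_complex (n : nat) (facets : seq {set 'I_n}) : complex 'I_n :=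
  Complex setT [set F : {set 'I_n} | has (fun G : {set 'I_n} => F \subset G) facets].

Definition vx {n : nat} (i : nat) : 'I_n.+1 := inord i.

(* vertex k of the paper is vx (k-1) *)
Definition P4 : complex 'I_4 :=
  gen_complex [:: [set vx 0; vx 1]; [set vx 1; vx 2]; [set vx 2; vx 3]].
Definition C4 : complex 'I_4 :=
  gen_complex [:: [set vx 0; vx 1]; [set vx 1; vx 2]; [set vx 2; vx 3]; [set vx 0; vx 3]].
Definition O6 : complex 'I_6 :=
  Complex setT [set S : {set 'I_6} | [&& ~~ ([set vx 0; vx 1] \subset S),
                                         ~~ ([set vx 2; vx 3] \subset S) &
                                         ~~ ([set vx 4; vx 5] \subset S)]].
Definition O6dual : complex 'I_6 := alexander_dual O6.
Definition J1 : complex 'I_5 :=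
  gen_complex [:: [set vx 0; vx 1]; [set vx 0; vx 4]; [set vx 1; vx 2; vx 3];
                  [set vx 2; vx 3; vx 4]].
Definition J1dual : complex 'I_5 :=
  gen_complex [:: [set vx 0; vx 2; vx 3]; [set vx 1; vx 2; vx 4]; [set vx 1; vx 3; vx 4]].
Definition J2 : complex 'I_5 :=
  gen_complex [:: [set vx 0; vx 1]; [set vx 1; vx 2; vx 4]; [set vx 2; vx 3];
                  [set vx 0; vx 3; vx 4]].

(* boundary of the simplex on {0..n} plus isolated vertex n+1 *)
Definition bdry_plus (n : nat) : complex 'I_n.+2 :=
  let A := [set i : 'I_n.+2 | val i < n.+1] in
  Complex setT [set S : {set 'I_n.+2} | ((S \subset A) && (S != A)) || (S == [set ord_max])].

(* cone^p(C4): vertices 0..3 form C4, vertices 4..p+3 are the cone points *)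
Definition cone_C4 (p : nat) : complex 'I_p.+4 :=
  Complex setT [set S : {set 'I_p.+4} |
    has (fun e : nat * nat => [forall i in S, (val i < 4) ==> ((val i == e.1) || (val i == e.2))])
        [:: (0, 1); (1, 2); (2, 3); (0, 3)]].

Definition beta_avoiding (T : finType) (C : complex T) : Prop :=
  forall D : complex T, is_minor D C ->
    ~ iso D P4 /\ ~ iso D O6 /\ ~ iso D O6dual /\ ~ iso D J1 /\ ~ iso D J1dual /\
    ~ iso D J2 /\ (forall n, 0 < n -> ~ iso D (bdry_plus n)).

Definition nonghost (T : finType) (C : complex T) : {set T} :=
  [set v in ground C | [set v] \in faces C].

(* Let a, b, c, d span an induced 4-cycle.  Whenever a, b, c, d still span an induced
   4-cycle in the link of a face R, every other vertex v of that link is a cone point over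
   it: each way in which v could fail to be joined to all four edges exhibits, in the link
   of R or of R + x for a vertex x, one of the forbidden minors P4, J1, J2 or
   bdry(Delta_1) + v (three isolated points).  Two such cone points v, w are adjacent, since
   otherwise {a, c}, {b, d}, {v, w} span an octahedron O6.  Induction on |G| then shows that
   every edge of the square together with any set G of non-ghost vertices off the square is
   a face, so a set of non-ghost vertices is a face exactly when it contains neither diagonal
   {a, c} nor {b, d}: these are the faces of cone^p(C4), where p is the number of non-ghost
   vertices off the square. *)

From mathcomp Require Import all_boot.
Set Implicit Arguments. Unset Strict Implicit. Unset Printing Implicit Defensive.

Lemma iso_of_seq (T : finType) n (D : complex T) (K : complex 'I_n.+1) (s : seq T) (x0 : T) :
  ground K = setT -> uniq s -> size s = n.+1 -> [set x in s] = ground D ->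
  (forall F : {set 'I_n.+1}, ([set nth x0 s i | i : 'I_n.+1 in F] \in faces D) = (F \in faces K)) ->
  iso D K.
Proof.
move=> gK us sn sD hF; pose g (i : 'I_n.+1) := nth x0 s i.
pose f t : 'I_n.+1 := insubd ord0 (index t s).
have fg i : f (g i) = i.
  by apply: val_inj; rewrite val_insubd index_uniq ?sn ?ltn_ord.
have gf t : t \in ground D -> g (f t) = t.
  rewrite -sD inE => ts; have ts_lt : index t s < n.+1 by rewrite -sn index_mem.
  by rewrite /g val_insubd ts_lt nth_index.
exists f; split; first by move=> x y xD yD e; rewrite -(gf x) // -(gf y) // e.
split.
  rewrite gK; apply/eqP; rewrite eqEsubset subsetT; apply/subsetP => i _.
  by rewrite -(fg i) imset_f // -sD inE mem_nth ?sn.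
move=> F FD; suff {1}-> : F = g @: (f @: F) by rewrite hF.
apply/setP => t.
apply/idP/imsetP => [tF | [i /imsetP [u uF ->] ->]]; last by rewrite gf // (subsetP FD).
by exists (f t); [exact: imset_f | rewrite gf // (subsetP FD)].
Qed.

Fixpoint bitseqs (n : nat) : seq (seq bool) :=
  if n is n'.+1 then map (cons true) (bitseqs n') ++ map (cons false) (bitseqs n')
  else [:: [::]].

Lemma bitseqsP n (bs : seq bool) : size bs = n -> bs \in bitseqs n.
Proof.
elim: n bs => [|n IH] [|b bs] //= [/IH bsn].
by rewrite mem_cat; case: b; rewrite map_f ?orbT.
Qed.

Definition bits n (F : {set 'I_n}) : seq bool := [seq i \in F | i <- enum 'I_n].

Lemma size_bits n (F : {set 'I_n}) : size (bits F) = n.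
Proof. by rewrite size_map size_enum_ord. Qed.

Lemma nth_bits n (F : {set 'I_n}) (i : 'I_n) : nth false (bits F) i = (i \in F).
Proof. by rewrite (nth_map i) ?size_enum_ord // nth_ord_enum. Qed.

Definition ord_set n (l : seq nat) : {set 'I_n} := [set i : 'I_n | val i \in l].

Definition bits_within n (bs : seq bool) (l : seq nat) :=
  all (fun k => nth false bs k ==> (k \in l)) (iota 0 n).

Lemma sub_ord_set n (F : {set 'I_n}) l : (F \subset ord_set n l) = bits_within n (bits F) l.
Proof.
apply/subsetP/allP => [Fl k | lF i iF].
  rewrite mem_iota add0n => kn; rewrite -[k]/(val (Ordinal kn)) nth_bits.
  by apply/implyP => /Fl; rewrite inE.
by rewrite inE; have := lF i; rewrite mem_iota ltn_ord nth_bits iF => /(_ isT).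
Qed.

Lemma ord_set_sub n (F : {set 'I_n}) l : all (fun k => k < n) l ->
  (ord_set n l \subset F) = all (nth false (bits F)) l.
Proof.
move=> /allP ln; apply/subsetP/allP => [lF k kl | Fl i].
  by rewrite -[k]/(val (Ordinal (ln k kl))) nth_bits lF // inE.
by rewrite inE => /Fl; rewrite nth_bits.
Qed.

Lemma ord_set_subset n l1 l2 :
  (ord_set n l1 \subset ord_set n l2) = all (fun k => (k < n) ==> (k \in l2)) l1.
Proof.
apply/subsetP/allP => [sub k kl | sub i]; last by rewrite !inE => /sub; rewrite ltn_ord.
by apply/implyP => kn; have := sub (Ordinal kn); rewrite !inE; apply.
Qed.

Lemma imset_ord_set (T : finType) n (s : seq T) x0 l : size s = n -> all (fun k => k < n) l ->
  [set nth x0 s i | i : 'I_n in ord_set n l] = [set x in map (nth x0 s) l].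
Proof.
move=> sn /allP ln; apply/setP => x; rewrite inE.
apply/imsetP/mapP => [[i] | [k kl ->]]; first by rewrite inE => il ->; exists (val i).
by exists (Ordinal (ln k kl)); rewrite // inE.
Qed.

(* Every face of the pattern [p] lies in a member of [fs], every non-face contains a member
   of [ns], and every vertex occurs in [fs]; checked by running over all [2 ^ n] subsets. *)
Definition certificate n (p : seq bool -> bool) (fs ns : seq (seq nat)) :=
  [&& all (all (fun k => k < n)) (fs ++ ns),
      all (fun k => has (fun l => k \in l) fs) (iota 0 n) &
      all (fun bs => if p bs then has (bits_within n bs) fs else has (all (nth false bs)) ns)
          (bitseqs n)].

Definition certified n (K : complex 'I_n) (fs ns : seq (seq nat)) :=
  ground K = setT /\
  exists2 p, forall F, (F \in faces K) = p (bits F) & certificate n p fs ns.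

Lemma iso_of_certificate (T : finType) n (D : complex T) (K : complex 'I_n.+1) fs ns
    (s : seq T) (x0 : T) :
  certified K fs ns ->
  (forall F G : {set T}, F \subset ground D -> G \subset F -> F \in faces D -> G \in faces D) ->
  uniq s -> size s = n.+1 -> [set x in s] = ground D ->
  all (fun l => [set x in map (nth x0 s) l] \in faces D) fs ->
  all (fun l => [set x in map (nth x0 s) l] \notin faces D) ns -> iso D K.
Proof.
move=> [gK [p hK /and3P [/allP bounded _ /allP cert]]] clD us sn sD /allP hfs /allP hns.
apply: (iso_of_seq (x0 := x0) gK us sn sD) => F.
pose img (A : {set 'I_n.+1}) := [set nth x0 s i | i : 'I_n.+1 in A].
have imgD A : img A \subset ground D.
  by rewrite -sD; apply/subsetP => _ /imsetP [i _ ->]; rewrite inE mem_nth ?sn.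
have img_ord_set l : l \in fs ++ ns -> [set x in map (nth x0 s) l] = img (ord_set n.+1 l).
  by move=> /bounded ln; rewrite /img imset_ord_set.
rewrite hK; have := cert _ (bitseqsP (size_bits F)).
case: (p (bits F)) => /hasP [l ll].
  rewrite -sub_ord_set => /(imsetS (fun i : 'I_n.+1 => nth x0 s i)) Fl.
  by apply: clD (imgD _) Fl _; rewrite -img_ord_set ?mem_cat ?ll // hfs.
rewrite -ord_set_sub ?bounded ?mem_cat ?ll ?orbT //.
move=> /(imsetS (fun i : 'I_n.+1 => nth x0 s i)) lF; apply: contraNF (hns l ll).
by rewrite img_ord_set ?mem_cat ?ll ?orbT // => nsD; apply: clD (imgD _) lF nsD.
Qed.

Definition link_face (T : finType) (C : complex T) (R : {set T}) (l : seq T) :=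
  [set x in l] :|: R \in faces C.

Definition restricted_link (T : finType) (C : complex T) (R X : {set T}) :=
  link (deletion C (ground C :\: (X :|: R))) R.

Section RestrictedLink.
Variables (T : finType) (C : complex T) (R X : {set T}).
Hypotheses (hC : is_complex C) (RC : R \in faces C).
Hypotheses (XC : X \subset ground C) (XR : [disjoint X & R]).

Lemma restricted_link_minor : is_minor (restricted_link C R X) C.
Proof.
exists (ground C :\: (X :|: R)), R; split.
  by rewrite disjoints_subset; apply/subsetP => x; rewrite !inE; case: (x \in R); rewrite ?orbT.
split=> //; rewrite inE RC /=; apply/subsetP => x xR.
by rewrite !inE xR orbT (subsetP (hC.1 _ RC)).
Qed.

Lemma ground_restricted_link : ground (restricted_link C R X) = X.
Proof.
apply/setP => x; rewrite !inE.
case xX: (x \in X); last by case: (x \in R); case: (x \in ground C).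
by rewrite (disjointFr XR xX) (subsetP XC).
Qed.

Lemma faces_restricted_link (G : {set T}) : G \subset X ->
  (G \in faces (restricted_link C R X)) = (G :|: R \in faces C).
Proof.
move=> GX; have GR : [disjoint G & R] by apply: disjointWl XR.
apply/imsetP/idP => [[F] | GRC].
  rewrite !inE => /andP [/andP [FC _] RF] ->; suff -> : F :\: R :|: R = F by [].
  apply/setP => x; rewrite !inE.
  by case: (boolP (x \in R)) => [/(subsetP RF) -> | _]; rewrite ?orbT ?orbF.
exists (G :|: R); last first.
  apply/setP => x; rewrite !inE.
  by case: (boolP (x \in G)) => [xG | _]; [rewrite (disjointFr GR xG) | case: (x \in R)].
rewrite !inE GRC subsetUr andbT; apply/subsetP => x xGR.
rewrite !inE (subsetP (hC.1 _ GRC)) // andbT.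
by case/setUP: xGR => [/(subsetP GX) -> | ->]; rewrite ?orbT.
Qed.
End RestrictedLink.

Lemma forbidden_link_pattern (T : finType) (C : complex T) n (K : complex 'I_n.+1) fs ns
    (R : {set T}) (s : seq T) (x0 : T) :
  is_complex C -> certified K fs ns -> (forall D, is_minor D C -> ~ iso D K) ->
  uniq s -> size s = n.+1 -> all (fun x => x \notin R) s ->
  all (fun l => link_face C R (map (nth x0 s) l)) fs ->
  all (fun l => ~~ link_face C R (map (nth x0 s) l)) ns -> False.
Proof.
move=> hC cK nK us sn sR /allP hfs /allP hns.
have [_ [p _ /and3P [/allP bounded /allP covered _]]] := cK.
have covering k : k < n.+1 ->
    exists2 l, l \in fs & nth x0 s k \in [set x in map (nth x0 s) l] :|: R.
  move=> kn; have /hasP [l lfs kl] : has (fun l => k \in l) fs by rewrite covered // mem_iota.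
  by exists l; rewrite // !inE map_f.
have RC : R \in faces C.
  by have [l lfs _] := covering 0 isT; apply: hC.2 (hfs l lfs) (subsetUr _ _).
have XC : [set x in s] \subset ground C.
  apply/subsetP => x; rewrite inE => xs.
  have [|l lfs] := covering (index x s); first by rewrite -sn index_mem.
  by rewrite nth_index //; apply: subsetP; apply: hC.1 (hfs l lfs).
have XR : [disjoint [set x in s] & R].
  rewrite disjoint_sym disjoints_subset; apply/subsetP => x xR; rewrite !inE.
  by apply: contraL xR => /(allP sR).
have in_s l : l \in fs ++ ns -> [set x in map (nth x0 s) l] \subset [set x in s].
  move=> /bounded /allP ln; apply/subsetP => x; rewrite !inE => /mapP [k kl ->].
  by rewrite mem_nth // sn ln.
apply: (nK _ (restricted_link_minor [set x in s] hC RC)).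
apply: (iso_of_certificate (x0 := x0) cK) us sn _ _ _.
- move=> F G; rewrite ground_restricted_link // => FX GF.
  rewrite !(faces_restricted_link hC XR) //; last exact: subset_trans GF FX.
  by move=> FRC; apply: hC.2 FRC _; exact: setSU.
- by rewrite ground_restricted_link.
- apply/allP => l lfs; rewrite (faces_restricted_link hC XR) ?in_s ?mem_cat ?lfs //.
  exact: hfs.
- apply/allP => l lns; rewrite (faces_restricted_link hC XR) ?in_s ?mem_cat ?lns ?orbT //.
  exact: hns.
Qed.

Lemma vx_eq n (i : 'I_n.+1) k : k <= n -> (i == vx k) = (val i == k).
Proof. by move=> kn; rewrite /vx -val_eqE /= inordK. Qed.

Lemma set2_vx n i j : i <= n -> j <= n -> [set vx i; vx j] = ord_set n.+1 [:: i; j].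
Proof. by move=> ni nj; apply/setP => x; rewrite !inE !vx_eq. Qed.

Lemma set3_vx n i j k : i <= n -> j <= n -> k <= n ->
  [set vx i; vx j; vx k] = ord_set n.+1 [:: i; j; k].
Proof. by move=> ni nj nk; apply/setP => x; rewrite !inE !vx_eq // orbA. Qed.

Lemma P4_certified :
  certified P4 [:: [:: 0; 1]; [:: 1; 2]; [:: 2; 3]] [:: [:: 0; 2]; [:: 1; 3]; [:: 0; 3]].
Proof.
split=> //; exists (fun bs => has (bits_within 4 bs) [:: [:: 0; 1]; [:: 1; 2]; [:: 2; 3]]).
  by move=> F; rewrite inE /= !set2_vx // !sub_ord_set.
by vm_compute.
Qed.

Lemma J1_certified :
  certified J1 [:: [:: 0; 1]; [:: 0; 4]; [:: 1; 2; 3]; [:: 2; 3; 4]]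
               [:: [:: 0; 2]; [:: 0; 3]; [:: 1; 4]].
Proof.
split=> //; exists (fun bs =>
  has (bits_within 5 bs) [:: [:: 0; 1]; [:: 0; 4]; [:: 1; 2; 3]; [:: 2; 3; 4]]).
  by move=> F; rewrite inE /= !set3_vx // !set2_vx // !sub_ord_set.
by vm_compute.
Qed.

Lemma J2_certified :
  certified J2 [:: [:: 0; 1]; [:: 1; 2; 4]; [:: 2; 3]; [:: 0; 3; 4]]
               [:: [:: 0; 2]; [:: 1; 3]; [:: 0; 1; 4]; [:: 2; 3; 4]].
Proof.
split=> //; exists (fun bs =>
  has (bits_within 5 bs) [:: [:: 0; 1]; [:: 1; 2; 4]; [:: 2; 3]; [:: 0; 3; 4]]).
  by move=> F; rewrite inE /= !set3_vx // !set2_vx // !sub_ord_set.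
by vm_compute.
Qed.

Lemma O6_certified :
  certified O6 [:: [:: 0; 2; 4]; [:: 0; 2; 5]; [:: 0; 3; 4]; [:: 0; 3; 5];
                   [:: 1; 2; 4]; [:: 1; 2; 5]; [:: 1; 3; 4]; [:: 1; 3; 5]]
               [:: [:: 0; 1]; [:: 2; 3]; [:: 4; 5]].
Proof.
split=> //; exists (fun bs => ~~ has (all (nth false bs)) [:: [:: 0; 1]; [:: 2; 3]; [:: 4; 5]]).
  by move=> F; rewrite inE /= !set2_vx // !ord_set_sub //= orbF !negb_or.
by vm_compute.
Qed.

Lemma bdry_plus1_certified :
  certified (bdry_plus 1) [:: [:: 0]; [:: 1]; [:: 2]] [:: [:: 0; 1]; [:: 1; 2]; [:: 0; 2]].
Proof.
split=> //; exists (fun bs =>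
  bits_within 3 bs [:: 0; 1] && ~~ (bits_within 3 bs [:: 0; 1] && all (nth false bs) [:: 0; 1])
  || bits_within 3 bs [:: 2] && all (nth false bs) [:: 2]).
  move=> F; rewrite inE /=.
  have -> : [set i : 'I_3 | val i < 2] = ord_set 3 [:: 0; 1].
    by apply/setP => -[[|[|[|k]]] kl]; rewrite !inE.
  have -> : [set ord_max : 'I_3] = ord_set 3 [:: 2].
    by apply/setP => -[[|[|[|k]]] kl]; rewrite !inE.
  by rewrite !eqEsubset !sub_ord_set !ord_set_sub.
by vm_compute.
Qed.

Lemma C4_pair_face i j : i < 4 -> j < 4 ->
  ([set vx i; vx j] \in faces C4) = (i == j) || odd (i + j).
Proof.
move=> i4 j4; rewrite inE /= !set2_vx // !ord_set_subset.
by case: i j i4 j4 => [|[|[|[|i]]]] [|[|[|[|j]]]].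
Qed.

Lemma cone_C4_face p (F : {set 'I_p.+4}) : (F \in faces (cone_C4 p)) =
  ~~ ((inord 0 \in F) && (inord 2 \in F)) && ~~ ((inord 1 \in F) && (inord 3 \in F)).
Proof.
have cone_edge x y : [forall i in F, (val i < 4) ==> ((val i == x) || (val i == y))] =
    all (fun k => (inord k \in F) ==> ((k == x) || (k == y))) [:: 0; 1; 2; 3].
  apply/forallP/allP => [all_i k ksq | all_k i]; last first.
    apply/implyP => iF; apply/implyP => i4.
    have : val i \in [:: 0; 1; 2; 3] by move: i4; rewrite !inE; case: (val i) => [|[|[|[|]]]].
    by move/all_k; rewrite inord_val iF.
  have k4 : k < 4 by move: ksq; rewrite !inE => /or4P [] /eqP ->.
  have inordK4 : val (inord k : 'I_p.+4) = k by apply: inordK; apply: leq_trans k4 _.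
  by apply/implyP => kF; move: (all_i (inord k)); rewrite kF inordK4 k4.
rewrite inE /= !cone_edge /=.
by case: (inord 0 \in F); case: (inord 1 \in F); case: (inord 2 \in F); case: (inord 3 \in F).
Qed.

Section BetaAvoiding.
Variables (T : finType) (C : complex T).
Hypotheses (hC : is_complex C) (hb : beta_avoiding C).
Local Notation lf := (link_face C).

Lemma link_face_subset R l R' l' :
  [set x in l] :|: R \subset [set x in l'] :|: R' -> lf R' l' -> lf R l.
Proof. by move=> sub lf'; apply: hC.2 lf' sub. Qed.

Lemma link_face_subseq R l l' : {subset l <= l'} -> lf R l' -> lf R l.
Proof.
move=> sub; apply: link_face_subset; apply/subsetP => x; rewrite !inE.
by case/orP => [/sub -> | ->]; rewrite ?orbT.
Qed.

Lemma link_faceU1 x R l : lf (x |: R) l = lf R (x :: l).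
Proof.
rewrite /link_face (_ : _ :|: _ = [set y in x :: l] :|: R) //.
by apply/setP => y; rewrite !inE orbCA orbA.
Qed.

Lemma link_faceS (R R' : {set T}) (l : seq T) : R' \subset R -> lf R l -> lf R' l.
Proof. by move=> sub; apply: link_face_subset; apply: setUS. Qed.

Lemma link_face_nonghost l x : lf set0 l -> x \in l -> x \in nonghost C.
Proof.
move=> lface xl; have x_face : [set x] \subset [set y in l] :|: set0 by rewrite sub1set !inE xl.
by rewrite /nonghost inE (hC.2 _ _ lface x_face) (subsetP (hC.1 _ lface)) // -sub1set.
Qed.

Definition square_edges (a b c d : T) := [:: [:: a; b]; [:: b; c]; [:: c; d]; [:: d; a]].

Definition link_square (R : {set T}) (a b c d : T) :=
  [/\ uniq [:: a; b; c; d], all (fun x => x \notin R) [:: a; b; c; d],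
      all (lf R) (square_edges a b c d) & ~~ lf R [:: a; c] && ~~ lf R [:: b; d]].

Definition square_apex (R : {set T}) (a b c d v : T) :=
  [/\ link_square R a b c d, v \notin [:: a; b; c; d], v \notin R & lf R [:: v]].

Local Unset Implicit Arguments.

Lemma no_link_three_points (R : {set T}) (a b c : T) :
  uniq [:: a; b; c] -> all (fun x => x \notin R) [:: a; b; c] ->
  lf R [:: a] -> lf R [:: b] -> lf R [:: c] ->
  ~~ lf R [:: a; b] -> ~~ lf R [:: b; c] -> ~~ lf R [:: a; c] -> False.
Proof.
move=> us sR fa fb fc nab nbc nac.
apply: (forbidden_link_pattern (R := R) (s := [:: a; b; c]) (x0 := a) hC bdry_plus1_certified
  (fun _ m => (hb m).2.2.2.2.2.2 1 isT)) => //=.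
  by rewrite fa fb fc.
by rewrite nab nbc nac.
Qed.

Lemma no_link_P4 (R : {set T}) (a b c d : T) :
  uniq [:: a; b; c; d] -> all (fun x => x \notin R) [:: a; b; c; d] ->
  lf R [:: a; b] -> lf R [:: b; c] -> lf R [:: c; d] ->
  ~~ lf R [:: a; c] -> ~~ lf R [:: b; d] -> ~~ lf R [:: a; d] -> False.
Proof.
move=> us sR fab fbc fcd nac nbd nad.
apply: (forbidden_link_pattern (R := R) (s := [:: a; b; c; d]) (x0 := a) hC P4_certified
  (fun _ m => (hb m).1)) => //=.
  by rewrite fab fbc fcd.
by rewrite nac nbd nad.
Qed.

Lemma no_link_J1 (R : {set T}) (a b c d e : T) :
  uniq [:: a; b; c; d; e] -> all (fun x => x \notin R) [:: a; b; c; d; e] ->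
  lf R [:: a; b] -> lf R [:: a; e] -> lf R [:: b; c; d] -> lf R [:: c; d; e] ->
  ~~ lf R [:: a; c] -> ~~ lf R [:: a; d] -> ~~ lf R [:: b; e] -> False.
Proof.
move=> us sR fab fae fbcd fcde nac nad nbe.
apply: (forbidden_link_pattern (R := R) (s := [:: a; b; c; d; e]) (x0 := a) hC J1_certified
  (fun _ m => (hb m).2.2.2.1)) => //=.
  by rewrite fab fae fbcd fcde.
by rewrite nac nad nbe.
Qed.

Lemma no_link_J2 (R : {set T}) (a b c d e : T) :
  uniq [:: a; b; c; d; e] -> all (fun x => x \notin R) [:: a; b; c; d; e] ->
  lf R [:: a; b] -> lf R [:: b; c; e] -> lf R [:: c; d] -> lf R [:: a; d; e] ->
  ~~ lf R [:: a; c] -> ~~ lf R [:: b; d] -> ~~ lf R [:: a; b; e] -> ~~ lf R [:: c; d; e] ->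
  False.
Proof.
move=> us sR fab fbce fcd fade nac nbd nabe ncde.
apply: (forbidden_link_pattern (R := R) (s := [:: a; b; c; d; e]) (x0 := a) hC J2_certified
  (fun _ m => (hb m).2.2.2.2.2.1)) => //=.
  by rewrite fab fbce fcd fade.
by rewrite nac nbd nabe ncde.
Qed.

Lemma no_link_octahedron (R : {set T}) (a a' b b' c c' : T) :
  uniq [:: a; a'; b; b'; c; c'] -> all (fun x => x \notin R) [:: a; a'; b; b'; c; c'] ->
  {in [:: a; a'], forall x, {in [:: b; b'], forall y, {in [:: c; c'], forall z,
    lf R [:: x; y; z]}}} ->
  ~~ lf R [:: a; a'] -> ~~ lf R [:: b; b'] -> ~~ lf R [:: c; c'] -> False.
Proof.
move=> us sR f na nb nc.
apply: (forbidden_link_pattern (R := R) (s := [:: a; a'; b; b'; c; c']) (x0 := a) hC O6_certified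
  (fun _ m => (hb m).2.1)) => //=.
  by rewrite !f ?inE ?eqxx ?orbT.
by rewrite na nb nc.
Qed.

Local Set Implicit Arguments.

Lemma link_face_nsubseq R l l' : {subset l' <= l} -> ~~ lf R l' -> ~~ lf R l.
Proof. by move=> sub; apply: contra; apply: link_face_subseq. Qed.

Ltac distinct := repeat match goal with
  | H : is_true (?x != ?y) |- context [?x == ?y] => rewrite (negbTE H)
  | H : is_true (?x != ?y) |- context [?y == ?x] => rewrite [y == x]eq_sym (negbTE H)
  | H : is_true (?x \notin ?R) |- context [?x \in ?R] => rewrite (negbTE H)
  end.

Ltac subseq_by_cases :=
  let x := fresh "x" in let H := fresh "H" in
  move=> x; rewrite !inE => H;
  repeat (case/orP: H => [/eqP -> | H]; [by rewrite ?eqxx ?orbT |]);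
  move/eqP: H => ->; by rewrite ?eqxx ?orbT.

Ltac face_from_context := match goal with
  | H : is_true (lf ?R _) |- is_true (lf ?R _) =>
      apply: link_face_subseq H; subseq_by_cases
  | H : is_true (~~ lf ?R _) |- is_true (~~ lf ?R _) =>
      apply: link_face_nsubseq H; subseq_by_cases
  end.

(* Closes side conditions of the [no_link_*] lemmas: distinctness, avoidance of [R], and
   (non-)faces that are sub- or superlists of ones in the context. *)
Ltac side := rewrite /= ?link_faceU1; repeat (apply/andP; split); rewrite ?inE;
  distinct; try done; try face_from_context.

Ltac unpack_apex H :=
  case: H => -[]; rewrite /= !inE !negb_or =>
    /and4P[/and3P[? ? ?] /andP[? ?] ? _] /and5P[? ? ? ? _] /and5P[? ? ? ? _] /andP[? ?]
    /and4P[? ? ? ?] ? ?.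

Lemma square_apex_rot R a b c d v : square_apex R a b c d v -> square_apex R b c d a v.
Proof. by move=> H; unpack_apex H; split; try split; side. Qed.

Lemma square_apex_flip R a b c d v : square_apex R a b c d v -> square_apex R a d c b v.
Proof. by move=> H; unpack_apex H; split; try split; side. Qed.

Section Apex.
Variables (R : {set T}) (a b c d v : T).
Hypothesis H : square_apex R a b c d v.

Lemma apex_adjacent_a_or_c : lf R [:: v; a] || lf R [:: v; c].
Proof.
unpack_apex H; apply/norP => -[nva nvc].
by apply: (no_link_three_points R v a c); side.
Qed.

Lemma apex_not_pendant : lf R [:: v; a] -> ~~ lf R [:: v; c] -> ~~ lf R [:: v; d] -> False.
Proof. by unpack_apex H => va nvc nvd; apply: (no_link_P4 R c d a v); side. Qed.

Lemma apex_triangle_of_edge : lf R [:: v; b] -> ~~ lf R [:: v; a] -> lf R [:: v; b; c].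
Proof.
unpack_apex H => vb nva; apply/negPn/negP => nvbc.
by apply: (no_link_three_points (b |: R) c a v); side.
Qed.

Lemma apex_not_J1 : ~~ lf R [:: v; a] -> lf R [:: v; b; c] -> lf R [:: v; c; d] -> False.
Proof. by unpack_apex H => nva vbc vcd; apply: (no_link_J1 R a b c v d); side. Qed.

Lemma apex_not_opposite_triangles :
  lf R [:: v; a; b] -> lf R [:: v; c; d] -> ~~ lf R [:: v; d; a] -> False.
Proof.
unpack_apex H => vab vcd nvda; case: (boolP (lf R [:: v; b; c])) => [vbc | nvbc].
  by apply: (no_link_P4 (v |: R) a b c d); side.
by apply: (no_link_J2 R c b a d v); side.
Qed.

End Apex.

Lemma square_apex_adjacent R a b c d v : square_apex R a b c d v -> lf R [:: v; a].
Proof.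
move=> H; apply/negPn/negP => nva; have H2 := square_apex_rot (square_apex_rot H).
have vc : lf R [:: v; c] by move: (apex_adjacent_a_or_c H); rewrite (negbTE nva).
have vb : lf R [:: v; b].
  by apply/negPn/negP => nvb; apply: (apex_not_pendant H2 vc nva nvb).
have vd : lf R [:: v; d].
  by apply/negPn/negP => nvd; apply: (apex_not_pendant (square_apex_flip H2) vc nva nvd).
have vbc := apex_triangle_of_edge H vb nva.
have vdc := apex_triangle_of_edge (square_apex_flip H) vd nva.
by apply: (apex_not_J1 H nva vbc); face_from_context.
Qed.

Lemma apex_triangle_ab_or_bc R a b c d v :
  square_apex R a b c d v -> lf R [:: v; a; b] || lf R [:: v; b; c].
Proof.
move=> H; have va := square_apex_adjacent H.
have vb := square_apex_adjacent (square_apex_rot H).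
have vc := square_apex_adjacent (square_apex_rot (square_apex_rot H)).
unpack_apex H; apply/norP => -[nvab nvbc].
by apply: (no_link_three_points (v |: R) a b c); side.
Qed.

Lemma square_apex_triangle R a b c d v : square_apex R a b c d v -> lf R [:: v; a; b].
Proof.
move=> H; apply/negPn/negP => nvab.
have H3 := square_apex_rot (square_apex_rot (square_apex_rot H)).
have vbc : lf R [:: v; b; c] by move: (apex_triangle_ab_or_bc H); rewrite (negbTE nvab).
have vda : lf R [:: v; d; a].
  by move: (apex_triangle_ab_or_bc H3); rewrite (negbTE nvab) orbF.
exact: apex_not_opposite_triangles (square_apex_rot H) vbc vda nvab.
Qed.

Lemma square_apexes_adjacent R a b c d v w :
  square_apex R a b c d v -> square_apex R a b c d w -> v != w -> lf R [:: v; w].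
Proof.
move=> Hv Hw vw; apply/negPn/negP => nvw.
have triangles u : square_apex R a b c d u ->
    [/\ lf R [:: u; a; b], lf R [:: u; b; c], lf R [:: u; c; d] & lf R [:: u; d; a]].
  move=> Hu; have Hu1 := square_apex_rot Hu; have Hu2 := square_apex_rot Hu1.
  split; apply: square_apex_triangle; [exact: Hu | exact: Hu1 | exact: Hu2 |].
  exact: square_apex_rot Hu2.
have [vab vbc vcd vda] := triangles v Hv; have [wab wbc wcd wda] := triangles w Hw.
unpack_apex Hv; unpack_apex Hw.
apply: (no_link_octahedron R a c b d v w); try by side.
by move=> x + y + z; rewrite !inE => /pred2P[]-> /pred2P[]-> /pred2P[]->; face_from_context.
Qed.

Section Square.
Variables a b c d : T.
Hypothesis sq : link_square set0 a b c d.

Definition apex_candidates := nonghost C :\: [set x in [:: a; b; c; d]].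
Local Notation U := apex_candidates.

Definition square_cone (G : {set T}) := all (lf G) (square_edges a b c d).

Lemma apex_candidates_notin (G : {set T}) x : G \subset U -> x \in [:: a; b; c; d] -> x \notin G.
Proof. by move=> GU xsq; apply/negP => /(subsetP GU); rewrite in_setD in_set xsq. Qed.

Lemma square_apex_of_cone (G : {set T}) v : G \subset U -> v \in U -> v \notin G ->
  square_cone G -> lf G [:: v] -> square_apex G a b c d v.
Proof.
move=> GU vU vG coneG Gv; case: sq => uabcd _ _ nondiag; split=> //.
- split=> //; first by apply/allP => x; apply: apex_candidates_notin.
  by case/andP: nondiag => nac nbd; rewrite !(contra (link_faceS (sub0set G))).
- by move: vU; rewrite !inE => /andP [].
Qed.

Lemma square_cone_setU1 (G : {set T}) v : G \subset U -> v \in U -> v \notin G ->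
  square_cone G -> lf G [:: v] -> square_cone (v |: G).
Proof.
move=> GU vU vG coneG Gv; have H := square_apex_of_cone GU vU vG coneG Gv.
have H1 := square_apex_rot H; have H2 := square_apex_rot H1.
rewrite /square_cone /= !link_faceU1 (square_apex_triangle H) (square_apex_triangle H1).
by rewrite (square_apex_triangle H2) (square_apex_triangle (square_apex_rot H2)).
Qed.

Lemma square_cone_vertex (G : {set T}) v : square_cone (v |: G) -> lf G [:: v].
Proof.
case/andP; rewrite link_faceU1 => vab _; apply: link_face_subseq vab.
by move=> x; rewrite inE => /eqP ->; rewrite mem_head.
Qed.

Lemma square_cone_adjacent (H : {set T}) u w : H \subset U -> u \in U -> w \in U ->
  u \notin H -> w \notin H -> u != w ->
  square_cone H -> square_cone (u |: H) -> square_cone (w |: H) -> lf (u |: H) [:: w].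
Proof.
move=> HU uU wU uH wH uw coneH /square_cone_vertex Hu /square_cone_vertex Hw.
rewrite link_faceU1; apply: square_apexes_adjacent uw; exact: square_apex_of_cone.
Qed.

Lemma square_cone_all (G : {set T}) : G \subset U -> square_cone G.
Proof.
have [n] := ubnP #|G|; elim: n G => // n IH G /ltnSE leGn GU.
have IHG (G' : {set T}) : G' \proper G -> square_cone G'.
  move=> ltG'; apply: IH (subset_trans (proper_sub ltG') GU).
  exact: leq_trans (proper_card ltG') leGn.
have subU (G' : {set T}) : G' \subset G -> G' \subset U by move/subset_trans; apply.
have [-> | [w wG]] := set_0Vmem G; first by case: sq.
have wU := subsetP GU w wG.
rewrite -(setD1K wG); apply: (square_cone_setU1 _ wU); rewrite ?setD11 //.
- by apply: subU; apply: subsetDl.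
- exact: IHG (properD1 wG).
have [-> | [u uG0]] := set_0Vmem (G :\ w).
  move: wU; rewrite !inE => /and3P [_ _ nw].
  by rewrite /link_face setU0 (_ : [set x in [:: w]] = [set w]) //; apply/setP => x; rewrite !inE.
have [uw uG] : u != w /\ u \in G by move: uG0; rewrite !inE => /andP [].
have G0G : G :\ w :\ u \subset G by apply: subset_trans (subsetDl _ _) (subsetDl _ _).
rewrite -(setD1K uG0); apply: (square_cone_adjacent _ _ _ _ _ uw) => //.
- exact: subU.
- exact: subsetP GU u uG.
- by rewrite setD11.
- by rewrite !inE eqxx andbF.
- exact: IHG (sub_proper_trans (subsetDl _ _) (properD1 wG)).
- by rewrite setD1K //; apply: IHG (properD1 wG).
have -> : G :\ w :\ u = G :\ u :\ w by rewrite !setDDl setUC.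
by rewrite setD1K ?IHG ?properD1 // !inE eq_sym uw.
Qed.

Lemma square_trace_in_edge (S : {set T}) :
  ~~ ((a \in S) && (c \in S)) -> ~~ ((b \in S) && (d \in S)) ->
  has (fun e => all (fun x => (x \in S) ==> (x \in e)) [:: a; b; c; d]) (square_edges a b c d).
Proof.
by case aS: (a \in S); case bS: (b \in S); case cS: (c \in S); case dS: (d \in S);
  rewrite //= !inE ?aS ?bS ?cS ?dS !eqxx /= ?orbT.
Qed.

Lemma nonghost_face (S : {set T}) : S \subset nonghost C ->
  (S \in faces C) = ~~ ((a \in S) && (c \in S)) && ~~ ((b \in S) && (d \in S)).
Proof.
move=> SN; apply/idP/idP => [SC | /andP [nac nbd]].
  have nondiag x y : ~~ lf set0 [:: x; y] -> ~~ ((x \in S) && (y \in S)).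
    apply: contra => /andP [xS yS]; apply: hC.2 SC _.
    by apply/subsetP => z; rewrite !inE orbF => /orP [] /eqP ->.
  by case: sq => _ _ _ /andP [nac nbd]; rewrite !nondiag.
have /hasP [e /(allP (square_cone_all (subsetIr S U))) Se /allP eS] :=
  square_trace_in_edge nac nbd.
apply: hC.2 Se _; apply/subsetP => x xS; rewrite in_setU in_setI xS /=.
case xsq: (x \in [:: a; b; c; d]); first by rewrite inE (implyP (eS x xsq)).
by rewrite /apex_candidates in_setD (subsetP SN) // !in_set xsq orbT.
Qed.

Lemma induced_nonghost_iso : iso (induced C (nonghost C)) (cone_C4 #|U|).
Proof.
have [uabcd _ /and5P [ab bc cd da _] _] := sq.
have sqN : {subset [:: a; b; c; d] <= nonghost C}.
  move=> x; rewrite !in_cons in_nil orbF => /or4P [] /eqP ->;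
    [apply: (link_face_nonghost ab) | apply: (link_face_nonghost bc)
    | apply: (link_face_nonghost cd) | apply: (link_face_nonghost da)];
    by rewrite !inE eqxx.
pose s := [:: a; b; c; d] ++ enum U.
have us : uniq s.
  rewrite cat_uniq uabcd enum_uniq andbT; apply/hasPn => x.
  by rewrite mem_enum /apex_candidates in_setD in_set => /andP [].
have sN : [set x in s] = nonghost C.
  apply/setP => x; rewrite inE mem_cat mem_enum /apex_candidates in_setD in_set.
  by case xsq: (x \in [:: a; b; c; d]); rewrite //= sqN.
have size_s : size s = #|U|.+4 by rewrite size_cat cardE.
pose g (i : 'I_#|U|.+4) := nth a s i.
have g_inj : injective g by move=> i j /eqP; rewrite nth_uniq ?size_s // => /eqP /val_inj.
have g_sq k : k < 4 -> g (inord k) = nth a [:: a; b; c; d] k.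
  by move=> k4; rewrite /g inordK ?nth_cat ?k4 //; apply: leq_trans k4 _.
apply: (iso_of_seq (x0 := a) (D := induced C (nonghost C)) _ us size_s sN) => // F.
have gFN : g @: F \subset nonghost C.
  by rewrite -sN; apply/subsetP => _ /imsetP [i _ ->]; rewrite inE mem_nth ?size_s.
have mem_g k : k < 4 -> (nth a [:: a; b; c; d] k \in g @: F) = (inord k \in F).
  by move=> k4; rewrite -g_sq // mem_imset.
rewrite inE /= gFN andbT nonghost_face // cone_C4_face.
by rewrite -!mem_g.
Qed.

End Square.
End BetaAvoiding.

Lemma induced_C4_square (T : finType) (C : complex T) (W : {set T}) :
  iso (induced C W) C4 -> exists a b c d, link_square C set0 a b c d.
Proof.
move=> [f [_ [fW fF]]].
have vertex k : exists2 t, t \in W & vx k = f t by apply/imsetP; rewrite fW inE.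
have [a aW fa] := vertex 0; have [b bW fb] := vertex 1.
have [c cW fc] := vertex 2; have [d dW fd] := vertex 3.
have pair x y : x \in W -> y \in W ->
    link_face C set0 [:: x; y] = ([set f x; f y] \in faces C4).
  move=> xW yW; have xyW : [set x; y] \subset W by rewrite subUset !sub1set xW yW.
  rewrite (_ : [set f x; f y] = f @: [set x; y]); last by rewrite imsetU1 imset_set1.
  rewrite -fF // inE xyW andbT /link_face setU0.
  by rewrite (_ : [set z in [:: x; y]] = [set x; y]) //; apply/setP => z; rewrite !inE.
have vx_inj i j : i < 4 -> j < 4 -> (vx i == vx j :> 'I_4) = (i == j).
  by move=> i4 j4; rewrite vx_eq //= inordK.
exists a, b, c, d; split=> //.
- by apply: (@map_uniq _ _ f); rewrite /= -fa -fb -fc -fd !inE !vx_inj.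
- by apply/allP => x; rewrite in_set0.
- by rewrite /= !pair // -fa -fb -fc -fd !C4_pair_face.
- by rewrite !pair // -fa -fb -fc -fd !C4_pair_face.
Qed.

Theorem proposition4p4 (T : finType) (C : complex T) :
  is_complex C -> beta_avoiding C ->
  (exists W : {set T}, W \subset ground C /\ iso (induced C W) C4) ->
  exists p : nat, iso (induced C (nonghost C)) (cone_C4 p).
Proof.
move=> hC hb [W [_ /induced_C4_square [a [b [c [d sq]]]]]].
by exists #|apex_candidates C a b c d|; apply: induced_nonghost_iso.
Qed.
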